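(* Let $X$ be a compact metric space and $f\colon X\to X$ continuous. Suppose there is a full orbit $\bar x=(x_i)_{i\in\mathbb Z}$ (i.e. $f(x_i)=x_{i+1}$ for all $i\in\mathbb Z$) such that $x_0\notin\lambda(\bar x)$. Then $\mathrm{Per}(\bar x)=\mathbb N$, and consequently $\mathrm{Per}(2^f)=\mathbb N$.
   Context: $2^X$ is the space of nonempty closed subsets of $X$ with the Hausdorff metric, and $2^f(C)=f(C)$. A full orbit of $x$ is a sequence $\bar x=(x_i)_{i\in\mathbb Z}$ in $X$ with $x_0=x$ and $f(x_i)=x_{i+1}$ for all $i$. Its limit set is $\lambda(\bar x)=\alpha(\bar x)\cup\omega(\bar x)=\bigcap_{m\ge 0}\overline{\bigcup_{n\ge m}\{x_{-n},x_n\}}$. For a full orbit $\bar x$, $\mathrm{Per}(\bar x)$ is the set of $k\in\mathbb N$ such that $\overline{\{x_{mk}:m\in\mathbb Z\}}\in 2^X$ is a periodic point of $2^f$ with fundamental period $k$. $\mathrm{Per}(2^f)$ is the set of fundamental periods of periodic points of $2^f$. *)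

From HB Require Import structures.
From mathcomp Require Import all_boot all_order all_algebra.
From mathcomp Require Import all_classical all_reals all_analysis.
Set Implicit Arguments. Unset Strict Implicit. Unset Printing Implicit Defensive.
Import Order.TTheory GRing.Theory Num.Theory.
Local Open Scope classical_set_scope.
Local Open Scope ring_scope.

Definition full_orbit {X : Type} (f : X -> X) (x : int -> X) : Prop :=
  forall i : int, f (x i) = x (i + 1).

Definition limit_set {X : topologicalType} (x : int -> X) : set X :=
  \bigcap_(m in [set: nat])
    closure [set y | exists n : nat, (m <= n)%N /\
                     (y = x (n%:Z) \/ y = x (- (n%:Z)))].

Definition hyper_map {X : Type} (f : X -> X) (C : set X) : set X := f @` C.

Definition hyper_periodic {X : topologicalType} (f : X -> X) (C : set X)
    (k : nat) : Prop :=
  [/\ closed C, C !=set0, (0 < k)%N,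
      iter k (hyper_map f) C = C &
      forall j : nat, (0 < j)%N -> (j < k)%N -> iter j (hyper_map f) C <> C].

Definition sub_orbit_closure {X : topologicalType} (x : int -> X) (k : nat)
  : set X := closure [set x (m * k%:Z) | m in [set: int]].

Definition Per_orbit {X : topologicalType} (f : X -> X) (x : int -> X)
  : set nat := [set k | hyper_periodic f (sub_orbit_closure x k) k].

Definition Per_hyper {X : topologicalType} (f : X -> X) : set nat :=
  [set k | exists C : set X, hyper_periodic f C k].

(* N = positive naturals *)
Definition posnat : set nat := [set k | (0 < k)%N].

From HB Require Import structures.
From mathcomp Require Import all_boot all_order all_algebra.
From mathcomp Require Import all_classical all_reals all_analysis.
From mathcomp Require Import zify.

Set Implicit Arguments.
Unset Strict Implicit.
Unset Printing Implicit Defensive.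
Import Order.TTheory GRing.Theory Num.Theory.
Local Open Scope classical_set_scope.
Local Open Scope ring_scope.

(* For [k > 0], the set [C_k = closure {x_(m k) | m in Z}] contains [x_0] and,
   X being compact, [f^k (C_k)] is the closure of [{x_(m k + k)}], i.e. [C_k]
   itself.  If [f^j (C_k) = C_k] for some [0 < j < k], then
   [x_0 \in closure {x_(m k + j)} \subset closure {x_i | i <> 0}].  Either some
   [x_i] with [i <> 0] equals [x_0], so that the orbit is periodic through
   [x_0], or [x_0] lies in the closure of every tail [{x_i | |i| >= n}]; in
   both cases [x_0 \in lambda(x)].  Hence [k] is the least period of [C_k]. *)

Section Iterates.
Variables (T : topologicalType) (f : T -> T).

Lemma iter_hyper_map n (C : set T) : iter n (hyper_map f) C = iter n f @` C.
Proof.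
elim: n => [|n IHn] /=; first by rewrite image_id.
by rewrite IHn /hyper_map image_comp.
Qed.

Lemma continuous_iter n : continuous f -> continuous (iter n f).
Proof.
move=> fc; elim: n => [|n IHn] /= t; first exact: cvg_id.
exact: (@continuous_comp _ _ _ (iter n f) f t (IHn t) (fc _)).
Qed.

End Iterates.

Section ImageClosure.
Variables (T U : topologicalType) (g : T -> U).
Hypothesis gc : continuous g.

Lemma image_closure_subset (A : set T) : g @` closure A `<=` closure (g @` A).
Proof.
move=> _ [p Ap <-] B /gc gB.
have [q [Aq Bq]] := Ap _ gB.
by exists (g q); split => //; exists q.
Qed.

Lemma image_closure (A : set T) : compact [set: T] -> hausdorff_space U ->
  g @` closure A = closure (g @` A).
Proof.
move=> cT hU; apply/seteqP; split; first exact: image_closure_subset.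
have : closed (g @` closure A).
  apply: compact_closed => //; apply: continuous_compact.
    exact: continuous_subspaceT.
  exact: (subclosed_compact (@closed_closure _ A) cT (@subsetT _ _)).
move=> /closure_id ->; apply: closureS => _ [a Aa <-].
by exists a => //; exact: subset_closure.
Qed.

End ImageClosure.

Section FullOrbit.
Variables (T : topologicalType) (f : T -> T) (x : int -> T).
Hypothesis fo : full_orbit f x.

Definition orbit_tail (m : nat) : set T :=
  [set y | exists n : nat, (m <= n)%N /\ (y = x n%:Z \/ y = x (- n%:Z))].

Lemma orbit_tail_le m n : (m <= n)%N -> orbit_tail n `<=` orbit_tail m.
Proof. by move=> mn y [k [nk yk]]; exists k; split => //; lia. Qed.

Lemma orbit_tail_mem m i : (m <= `|i|)%N -> orbit_tail m (x i).
Proof.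
case: i => n mn; first by exists n; split => //; left.
by exists n.+1; split => //; right; rewrite NegzE.
Qed.

Lemma full_orbit_iter n i : iter n f (x i) = x (i + n%:Z).
Proof.
elim: n => [|n IHn] /=; first by rewrite addr0.
by rewrite IHn fo; congr x; lia.
Qed.

Lemma limit_set_periodic i : i != 0 -> x i = x 0 -> limit_set x (x 0).
Proof.
move=> i0 xi.
have shift n : x (i + n%:Z) = x n%:Z.
  by rewrite -full_orbit_iter xi full_orbit_iter add0r.
have shift_abs n : x (absz i + n)%N = x n.
  have [i_ge0|i_lt0] := leP 0 i; first by rewrite -[RHS]shift; congr x; lia.
  by rewrite -[LHS](shift (absz i + n)); congr x; lia.
have period t : x (t * absz i)%N = x 0.
  by elim: t => [|t IHt] //; rewrite -IHt -[RHS]shift_abs; congr x; lia.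
move=> m _; apply: subset_closure; rewrite -(period m).
by apply: orbit_tail_mem; rewrite absz_nat leq_pmulr //; lia.
Qed.

Section Hausdorff.
Hypothesis hT : hausdorff_space T.

Lemma closure_set1 (a : T) : closure [set a] = [set a].
Proof. exact/esym/closure_id/accessible_closed_set1/hausdorff_accessible. Qed.

Lemma closure_orbit_tailS (a : T) n : closure (orbit_tail n) a ->
  x n%:Z <> a -> x (- n%:Z) <> a -> closure (orbit_tail n.+1) a.
Proof.
move=> an xn_a xNn_a.
have split_tail : orbit_tail n `<=`
    orbit_tail n.+1 `|` [set x n%:Z] `|` [set x (- n%:Z)].
  move=> y [k [nk hk]]; have [<-|kn] := eqVneq k n.
    by case: hk => ->; [left; right|right].
  by left; left; exists k; split => //; lia.
have := closureS split_tail an; rewrite !closureU !closure_set1.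
by case=> [[//|/esym/xn_a]|/esym/xNn_a].
Qed.

Lemma limit_set_closure_orbit_tail : closure (orbit_tail 1) (x 0) ->
  limit_set x (x 0).
Proof.
move=> x0_tail; have [[i [i0 xi]]|aperiodic] :=
  pselect (exists i, i != 0 /\ x i = x 0); first exact: limit_set_periodic xi.
have tails n : closure (orbit_tail n.+1) (x 0).
  elim: n => [//|n IHn]; apply: closure_orbit_tailS => // xn.
  - by apply: aperiodic; exists n.+1%:Z.
  - by apply: aperiodic; exists (- n.+1%:Z).
move=> m _; exact: (closureS (orbit_tail_le (leqnSn m)) (tails m)).
Qed.

End Hausdorff.

Lemma sub_orbit_closure_x0 k : sub_orbit_closure x k (x 0).
Proof. by apply: subset_closure; exists 0 => //; rewrite mul0r. Qed.

Lemma iter_sub_orbit_closure k : compact [set: T] -> hausdorff_space T ->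
  continuous f -> iter k f @` sub_orbit_closure x k = sub_orbit_closure x k.
Proof.
move=> cT hT fc; rewrite image_closure //; last exact: continuous_iter.
congr closure; apply/seteqP; split.
  move=> _ [_ [m _ <-] <-]; exists (m + 1) => //.
  by rewrite full_orbit_iter mulrDl mul1r.
move=> _ [m _ <-]; exists (x ((m - 1) * k%:Z)); first by exists (m - 1).
by rewrite full_orbit_iter mulrBl mul1r subrK.
Qed.

Lemma iter_sub_orbit_closure_neq j k : hausdorff_space T -> continuous f ->
  ~ limit_set x (x 0) -> (0 < j < k)%N ->
  iter j f @` sub_orbit_closure x k <> sub_orbit_closure x k.
Proof.
move=> hT fc nl /andP[j0 jk] fjC; apply/nl/limit_set_closure_orbit_tail => //.
have := sub_orbit_closure_x0 k; rewrite -fjC.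
move=> /(image_closure_subset (continuous_iter (n := j) fc)).
apply: closureS => _ [_ [m _ <-] <-]; rewrite full_orbit_iter.
apply: orbit_tail_mem; rewrite absz_gt0.
by apply/eqP => mkj; have [m_ge0|m_lt0] := leP 0 m; nia.
Qed.

Lemma hyper_periodic_sub_orbit_closure k : compact [set: T] ->
  hausdorff_space T -> continuous f -> ~ limit_set x (x 0) -> (0 < k)%N ->
  hyper_periodic f (sub_orbit_closure x k) k.
Proof.
move=> cT hT fc nl k0; split => //.
- exact: closed_closure.
- by exists (x 0); exact: sub_orbit_closure_x0.
- by rewrite iter_hyper_map iter_sub_orbit_closure.
- move=> j j0 jk; rewrite iter_hyper_map.
  by apply: iter_sub_orbit_closure_neq => //; rewrite j0.
Qed.

End FullOrbit.

Theorem proposition4p2 (R : realType) (X : metricType R) (f : X -> X)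
    (x : int -> X) :
  compact [set: X] -> continuous f ->
  full_orbit f x -> ~ limit_set x (x 0) ->
  Per_orbit f x = posnat /\ Per_hyper f = posnat.
Proof.
move=> cX fc fo nl.
have hX : hausdorff_space X by exact: metric_hausdorff.
have periodic k : (0 < k)%N -> hyper_periodic f (sub_orbit_closure x k) k.
  exact: hyper_periodic_sub_orbit_closure.
split; apply/seteqP; split.
- by move=> k [].
- exact: periodic.
- by move=> k [C []].
- by move=> k k0; exists (sub_orbit_closure x k); exact: periodic.
Qed.
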